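(* Every quasi 4-connected graph $G$ has a star-decomposition of adhesion three whose central torso is internally 4-connected or isomorphic to $K_4$ or to $K_3$, and all of whose leaf-bags have exactly four vertices.
   Context: All graphs are finite and simple. A separation of $G$ is an unordered pair $\{A,B\}$ with $A\cup B=V(G)$ and no edge between $A\setminus B$ and $B\setminus A$; its order is $|A\cap B|$; a 3-separation has order exactly 3; it is proper if $A\setminus B\ne\emptyset\ne B\setminus A$. A graph is quasi 4-connected if it is 3-connected, has more than four vertices, and every 3-separation $\{A,B\}$ has a side ($A$ or $B$) with at most four vertices. A graph is internally 4-connected if it is 3-connected, has more than four vertices, and every proper 3-separation $\{A,B\}$ has independent separator $A\cap B$ and satisfies $|A\setminus B|=1$ or $|B\setminus A|=1$. A star-decomposition is a tree-decomposition $(T,(V_t)_{t\in T})$ whose tree $T$ is a star $K_{1,n}$ ($n\ge0$) with a designated central node $c$ (for $n=1$ either node may serve as centre); it has adhesion three if every adhesion set $V_t\cap V_{t'}$ for an edge $tt'$ of $T$ has exactly three vertices; leaf-bags are the bags $V_t$ of the leaves $t\neq c$; the central torso is the graph obtained from $G[V_c]$ by making every adhesion set $V_c\cap V_t$ a clique. *)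

(* A finite simple graph is a finType T with a symmetric,
   irreflexive relation e : rel T.  All graph notions below are stated for
   the graph (S, e) with vertex set S : {set T} and edges e restricted to S;
   the graph G itself is ([set: T], e). *)
From mathcomp Require Import all_boot.
Set Implicit Arguments.
Unset Strict Implicit.
Unset Printing Implicit Defensive.

Section Graphs.
Variable T : finType.

Definition restr (S : {set T}) (e : rel T) : rel T :=
  [rel x y | [&& x \in S, y \in S & e x y]].

(* (S, e) is connected (nonempty-ness is irrelevant below) *)
Definition connected_on (S : {set T}) (e : rel T) : Prop :=
  forall x y, x \in S -> y \in S -> connect (restr S e) x y.

Definition k_connected (k : nat) (S : {set T}) (e : rel T) : Prop :=
  k < #|S| /\
  forall X : {set T}, X \subset S -> #|X| < k -> connected_on (S :\: X) e.

Definition separation (S : {set T}) (e : rel T) (A B : {set T}) : Prop :=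
  [/\ A \subset S, B \subset S, A :|: B = S &
      forall x y, x \in A :\: B -> y \in B :\: A -> ~~ e x y].

Definition sep_order (A B : {set T}) : nat := #|A :&: B|.

Definition proper_sep (A B : {set T}) : Prop :=
  A :\: B != set0 /\ B :\: A != set0.

Definition quasi_4_connected (S : {set T}) (e : rel T) : Prop :=
  [/\ k_connected 3 S e, 4 < #|S| &
      forall A B, separation S e A B -> sep_order A B = 3 ->
        #|A| <= 4 \/ #|B| <= 4].

Definition internally_4_connected (S : {set T}) (e : rel T) : Prop :=
  [/\ k_connected 3 S e, 4 < #|S| &
      forall A B, separation S e A B -> sep_order A B = 3 -> proper_sep A B ->
        (forall x y, x \in A :&: B -> y \in A :&: B -> ~~ e x y) /\
        (#|A :\: B| = 1 \/ #|B :\: A| = 1)].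

Definition iso_complete (n : nat) (S : {set T}) (e : rel T) : Prop :=
  exists f : 'I_n -> T,
    [/\ injective f, forall x, x \in S <-> (exists i, f i = x) &
        forall i j, e (f i) (f j) = (i != j)].

Definition tree_decomposition (I : finType) (tr : rel I)
  (bags : I -> {set T}) (S : {set T}) (e : rel T) : Prop :=
  [/\ forall t, bags t \subset S,
      forall x, x \in S -> exists t, x \in bags t,
      forall x y, x \in S -> y \in S -> e x y ->
        exists t, (x \in bags t) && (y \in bags t) &
      forall x t1 t2, x \in bags t1 -> x \in bags t2 ->
        connect [rel s t | [&& tr s t, x \in bags s & x \in bags t]] t1 t2].

(* the star K_{1,n}: nodes option 'I_n, centre None, leaves Some i *)
Definition star_rel (n : nat) : rel (option (ordinal n)) :=
  [rel s t | (s == None) != (t == None)].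

Definition star_decomposition (n : nat) (bags : option 'I_n -> {set T})
  (S : {set T}) (e : rel T) : Prop :=
  tree_decomposition (@star_rel n) bags S e.

Definition adhesion_three (n : nat) (bags : option 'I_n -> {set T}) : Prop :=
  forall i : 'I_n, #|bags None :&: bags (Some i)| = 3.

Definition torso_rel (n : nat) (bags : option 'I_n -> {set T}) (e : rel T)
  : rel T :=
  [rel x y | [&& x != y, x \in bags None, y \in bags None &
     e x y || [exists i : 'I_n, (x \in bags (Some i)) && (y \in bags (Some i))]]].

End Graphs.

From mathcomp Require Import all_boot zify.
Set Implicit Arguments.
Unset Strict Implicit.
Unset Printing Implicit Defensive.

(* Let G be quasi 4-connected.  Its minimum degree is at least
   three, and a small side of a 3-separation consists of a single vertex
   whose neighbourhood is the separator, so that vertex has degree three.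
   Choose a maximal independent set D of degree-3 vertices.  The star
   decomposition has centre bag V(G) \ D and, for each v in D, the leaf bag
   {v} u N(v): four vertices meeting the centre in the three vertices N(v).
   In the central torso every N(v) is a clique, so every path of G avoiding
   a set X disjoint from D shortcuts to a path of the torso: the torso is
   3-connected when G is.  A 3-separation of the torso extends to one of G
   (put v in D on the side containing N(v)); if it were proper, the small
   side of the extension would be a degree-3 vertex outside D whose whole
   neighbourhood avoids D, contradicting maximality of D.  Hence the torso
   has no proper 3-separation at all: it is internally 4-connected when it
   has more than four vertices, and otherwise it is complete, i.e. K_4 or
   K_3. *)

Section GraphFacts.
Variables (T : finType) (e : rel T).

Definition nbhd (x : T) : {set T} := [set y | e x y].

Lemma connect_from_isolated (S : {set T}) (r : rel T) x y :
  (forall v, v \in S -> ~~ r x v) -> connect (restr S r) x y -> y = x.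
Proof.
move=> isol /connectP [[|z p] /=]; first by move=> _ ->.
by case/andP=> /and3P [_ zS rxz] _ _; move: (isol z zS); rewrite rxz.
Qed.

Lemma separation_sym (S A B : {set T}) (r : rel T) : symmetric r ->
  separation S r A B -> separation S r B A.
Proof.
move=> r_sym [sA sB AB nedge]; split => //; first by rewrite setUC.
by move=> x y xB yA; rewrite r_sym; apply: nedge.
Qed.

Lemma iso_complete_of_clique n (S : {set T}) (r : rel T) :
  #|S| = n -> {in S &, forall x y, r x y = (x != y)} -> iso_complete n S r.
Proof.
move=> cardS clique; exists (fun i => enum_val (cast_ord (esym cardS) i)); split.
- by move=> i j /enum_val_inj /cast_ord_inj.
- move=> x; split => [xS|[i <-]]; last exact: enum_valP.
  by exists (cast_ord cardS (enum_rank_in xS x)); rewrite cast_ordK enum_rankK_in.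
- move=> i j; rewrite clique ?enum_valP //.
  by rewrite (inj_eq enum_val_inj) (inj_eq (@cast_ord_inj _ _ _)).
Qed.

Hypothesis e_irr : irreflexive e.

Lemma k_connected_min_degree k :
  k_connected k [set: T] e -> forall x, k <= #|nbhd x|.
Proof.
case=> bigT conn x; rewrite leqNgt; apply/negP => small.
have [y yout] : exists y, y \notin x |: nbhd x.
  apply/existsP; rewrite -negb_forall; apply/negP => /forallP all_in.
  have : #|[set: T]| <= #|x |: nbhd x|.
    by apply: subset_leq_card; apply/subsetP => z _; rewrite all_in.
  rewrite cardsU1; lia.
move: yout; rewrite !inE negb_or => /andP [/negbTE yx ynx].
have xin : x \in [set: T] :\: nbhd x by rewrite !inE e_irr.
have yin : y \in [set: T] :\: nbhd x by rewrite !inE ynx.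
have /connect_from_isolated : forall v, v \in [set: T] :\: nbhd x -> ~~ e x v.
  by move=> v; rewrite !inE andbT.
by move=> /(_ y (conn _ (subsetT _) small x y xin yin)) /eqP; rewrite yx.
Qed.

Lemma lone_vertex_nbhd (P Q : {set T}) x :
  separation [set: T] e P Q -> #|P :\: Q| <= 1 -> x \in P :\: Q ->
  nbhd x \subset P :&: Q.
Proof.
case=> _ _ PQ nedge /card_le1_eqP lone xPQ; apply/subsetP => w; rewrite inE => exw.
have wP : w \in P.
  apply: contraT => wnP; have wQP : w \in Q :\: P.
    by move: (in_setT w); rewrite -PQ inE (negbTE wnP) inE wnP.
  by move: (nedge x w xPQ wQP); rewrite exw.
rewrite inE wP; apply: contraT => wnQ.
have xw : x = w by apply: lone; rewrite // inE wnQ.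
by move: exw; rewrite xw e_irr.
Qed.

End GraphFacts.

Section NeighbourhoodStar.
Variables (T : finType) (e : rel T).
Hypotheses (e_sym : symmetric e) (e_irr : irreflexive e).
Hypothesis G_q4c : quasi_4_connected [set: T] e.

Variable D : {set T}.
Hypothesis D_indep : {in D &, forall u w, ~~ e u w}.
Hypothesis D_degree3 : {in D, forall v, #|nbhd e v| = 3}.
Hypothesis D_dominates :
  forall x, x \notin D -> #|nbhd e x| = 3 -> exists2 v, v \in D & e x v.

Definition nbhd_bags (o : option 'I_#|D|) : {set T} :=
  if o is Some i then enum_val i |: nbhd e (enum_val i) else ~: D.

Definition torso : rel T := torso_rel nbhd_bags e.

Lemma G_3connected : k_connected 3 [set: T] e.
Proof. by case: G_q4c. Qed.

Lemma nbhd_D_outside v w : v \in D -> e v w -> w \notin D.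
Proof. by move=> vD evw; apply: contraTN evw => wD; apply: D_indep. Qed.

Lemma torso_clique v u w : v \in D -> e v u -> e v w -> u != w -> torso u w.
Proof.
move=> vD evu evw uw.
rewrite /torso /torso_rel /= uw !inE (nbhd_D_outside vD evu) (nbhd_D_outside vD evw).
apply/orP; right; apply/existsP; exists (enum_rank_in vD v).
by rewrite /= enum_rankK_in // !inE evu evw !orbT.
Qed.

Lemma torso_edge_inv u w : torso u w -> [/\ u \notin D, w \notin D & u != w].
Proof. by rewrite /torso /torso_rel /= !inE => /and4P [-> -> -> _]. Qed.

Lemma torso_of_edge u w : u \notin D -> w \notin D -> e u w -> torso u w.
Proof.
move=> uD wD euw; rewrite /torso /torso_rel /= !inE uD wD euw andbT.
by apply: contraTneq euw => ->; rewrite e_irr.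
Qed.

(* Deleting a set X disjoint from D: if G - X is connected, so is the
   torso minus X, since a path of G through v in D shortcuts via the clique
   N(v).  Along a path of G - X starting at x we maintain that x reaches in
   the torso the current vertex, or all its neighbours outside X if it lies
   in D. *)
Lemma torso_connected (X : {set T}) :
  connected_on ([set: T] :\: X) e -> X \subset ~: D ->
  connected_on (~: D :\: X) torso.
Proof.
move=> connG XC x y; rewrite !inE => /andP [xX xD] /andP [yX yD].
have [p pth yE] : exists2 p, path (restr ([set: T] :\: X) e) x p & y = last x p.
  by apply/connectP/connG; rewrite !inE ?xX ?yX.
set R := restr (~: D :\: X) torso.
pose reach z := if z \in D then forall w, e z w -> w \notin X -> connect R x w
                else connect R x z.
have step a b : reach a -> a \notin X -> b \notin X -> e a b -> reach b.
  rewrite /reach => Ra aX bX eab.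
  case: (boolP (a \in D)) Ra => aD Ra; case: (boolP (b \in D)) => bD.
  - by move: (D_indep aD bD); rewrite eab.
  - exact: Ra.
  - move=> w ebw wX; case: (eqVneq a w) => [<- //|aw].
    apply: connect_trans Ra (connect1 _).
    rewrite /R /restr /= !inE aX wX aD (nbhd_D_outside bD ebw) /=.
    by apply: torso_clique bD _ ebw aw; rewrite e_sym.
  - apply: connect_trans Ra (connect1 _).
    by rewrite /R /restr /= !inE aX bX aD bD /=; apply: torso_of_edge.
suff : reach y by rewrite /reach (negbTE yD).
have lift q a : a \notin X -> path (restr ([set: T] :\: X) e) a q ->
    reach a -> reach (last a q).
  elim: q a => [//|b q IH] a aX /= /andP [eab qpath] Ra.
  move: eab; rewrite /restr /= !inE => /and3P [_ /andP [bX _] eab].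
  exact: IH b bX qpath (step a b Ra aX bX eab).
by rewrite yE; apply: lift; rewrite // /reach (negbTE xD).
Qed.

(* A small side of a 3-separation of G whose separator avoids D lies in D:
   its lone vertex has degree three, so by maximality it has a neighbour in
   D, which would lie in the separator. *)
Lemma small_side_in_D (P Q : {set T}) :
  separation [set: T] e P Q -> #|P :&: Q| = 3 -> #|P| <= 4 ->
  P :&: Q \subset ~: D -> P :\: Q \subset D.
Proof.
move=> sepPQ card3 smallP sepC; apply/subsetP => x xPQ; apply: contraT => xD.
have lone : #|P :\: Q| <= 1 by rewrite cardsD card3; lia.
have Nx := lone_vertex_nbhd e_irr sepPQ lone xPQ.
have deg3 : #|nbhd e x| = 3.
  have := subset_leq_card Nx; have := k_connected_min_degree e_irr G_3connected x.
  rewrite card3; lia.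
have [v vD exv] := D_dominates xD deg3.
have vsep : v \in P :&: Q by apply: (subsetP Nx); rewrite inE.
by move: (subsetP sepC v vsep); rewrite inE vD.
Qed.

Lemma notin_of_sub_compl (A : {set T}) z : A \subset ~: D -> z \in D -> z \notin A.
Proof. by move=> AC zD; apply: contraL zD => /(subsetP AC); rewrite inE. Qed.

Definition lift_left (A : {set T}) : {set T} :=
  A :|: [set v in D | nbhd e v \subset A].
Definition lift_right (A B : {set T}) : {set T} :=
  B :|: [set v in D | ~~ (nbhd e v \subset A)].

Lemma lift_sides (A B : {set T}) : A \subset ~: D -> B \subset ~: D ->
  [/\ lift_left A :&: lift_right A B = A :&: B,
      A :\: B \subset lift_left A :\: lift_right A B &
      B :\: A \subset lift_right A B :\: lift_left A].
Proof.
move=> AC BC.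
have notA := notin_of_sub_compl AC; have notB := notin_of_sub_compl BC.
split.
- apply/setP => z; rewrite !inE; case: (boolP (z \in D)) => zD /=.
    by rewrite (negbTE (notA _ zD)) (negbTE (notB _ zD)) /=; case: (_ \subset _).
  by rewrite !orbF.
- apply/subsetP => z; rewrite !inE => /andP [zB zA].
  by rewrite zA (negbTE zB) (negbTE (contraL (notA z) zA)).
- apply/subsetP => z; rewrite !inE => /andP [zA zB].
  by rewrite zB (negbTE zA) (negbTE (contraL (notB z) zB)).
Qed.

(* The extension is a separation of G: an edge from v in D to the other
   side would give a torso edge across (A, B) through the clique N(v). *)
Lemma lift_separation (A B : {set T}) : separation (~: D) torso A B ->
  separation [set: T] e (lift_left A) (lift_right A B).
Proof.
case=> AC BC ABC nedge.
have notA := notin_of_sub_compl AC; have notB := notin_of_sub_compl BC.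
have inAB z : z \notin D -> (z \in A) || (z \in B) by move=> zD; rewrite -in_setU ABC inE.
split; [exact: subsetT | exact: subsetT | | ].
  apply/setP => z; rewrite !inE; case: (boolP (z \in D)) => zD /=.
    by case: (_ \subset _); rewrite !orbT.
  by rewrite !orbF; apply: inAB.
move=> x y; rewrite !inE.
case: (boolP (x \in D)) => xD; case: (boolP (y \in D)) => yD /=.
- by move=> _ _; apply: D_indep.
- rewrite (negbTE (notA _ xD)) (negbTE (notB _ xD)) /= !orbF.
  move=> /andP [_ NxA] /andP [yA _]; apply: contraL yA => exy.
  by rewrite (subsetP NxA) ?inE.
- rewrite (negbTE (notA _ yD)) (negbTE (notB _ yD)) /= !orbF.
  move=> /andP [xB xA] /andP [_ /subsetPn [w]]; rewrite inE => eyw wA.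
  have wB : w \in B by move: (inAB w (nbhd_D_outside yD eyw)); rewrite (negbTE wA).
  have xw : x != w by apply: contraNneq wA => <-.
  have := nedge x w; rewrite !inE xB xA wB wA => /(_ isT isT); apply: contra => exy.
  by apply: torso_clique yD _ eyw xw; rewrite e_sym.
- rewrite !orbF => /andP [xB xA] /andP [yA yB].
  have := nedge x y; rewrite !inE xB xA yB yA => /(_ isT isT).
  by apply: contra; apply: torso_of_edge.
Qed.

(* The torso has no proper 3-separation: the extension to G of such a
   separation would have a small side containing a vertex outside D. *)
Lemma torso_no_proper_3sep (A B : {set T}) : separation (~: D) torso A B ->
  sep_order A B = 3 -> ~ proper_sep A B.
Proof.
move=> sepAB card3 [/set0Pn [a aAB] /set0Pn [b bBA]].
have [AC BC _ _] := sepAB.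
have [PQE sAP sBQ] := lift_sides AC BC.
have sepPQ := lift_separation sepAB.
set P := lift_left A in PQE sAP sBQ sepPQ; set Q := lift_right A B in PQE sAP sBQ sepPQ.
have sepC : P :&: Q \subset ~: D by rewrite PQE; apply: subset_trans (subsetIl _ _) AC.
have orderPQ : #|P :&: Q| = 3 by rewrite PQE.
have [_ _ /(_ P Q sepPQ orderPQ) [smallP|smallQ]] := G_q4c.
- have aD : a \in D.
    by apply: (subsetP (small_side_in_D sepPQ orderPQ smallP sepC)); apply: (subsetP sAP).
  by move: aAB; rewrite inE => /andP [_ /(subsetP AC)]; rewrite inE aD.
- have sepQP := separation_sym e_sym sepPQ.
  have bD : b \in D.
    apply: (subsetP (small_side_in_D sepQP _ smallQ _)); rewrite 1?setIC //.
    exact: (subsetP sBQ).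
  by move: bBA; rewrite inE => /andP [_ /(subsetP BC)]; rewrite inE bD.
Qed.

(* A torso with at most four vertices is complete: two non-adjacent
   vertices x, y would be separated by deleting the at most two others. *)
Lemma torso_complete : #|~: D| <= 4 ->
  {in ~: D &, forall x y, torso x y = (x != y)}.
Proof.
move=> small x y xC yC; case: (eqVneq x y) => [<-|xy].
  by apply/negP => /torso_edge_inv [_ _]; rewrite eqxx.
apply/idP; apply: contraT => nxy.
set X := ~: D :\: [set x; y].
have XC : X \subset ~: D by apply: subsetDl.
have X3 : #|X| < 3.
  have xyC : [set x; y] \subset ~: D by rewrite subUset !sub1set xC yC.
  rewrite /X cardsD (setIidPr xyC) cards2 xy; lia.
have [_ connG] := G_3connected.
have conn := torso_connected (connG X (subsetT _) X3) XC.
have xin : x \in ~: D :\: X by rewrite !inE eqxx; rewrite inE in xC; rewrite xC.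
have yin : y \in ~: D :\: X by rewrite !inE eqxx orbT; rewrite inE in yC; rewrite yC.
have yx : y = x.
  apply: connect_from_isolated (conn x y xin yin) => v.
  rewrite !inE; case: (v \in D); rewrite /= ?andbF ?andbT ?negbK // => /orP [] /eqP ->.
    by apply/negP => /torso_edge_inv [_ _]; rewrite eqxx.
  exact: nxy.
by rewrite yx eqxx in xy.
Qed.

(* The bags form a star decomposition of G: a vertex of D lies only in its
   own leaf bag, any other vertex lies in the centre bag. *)
Lemma nbhd_bags_decomposition : star_decomposition nbhd_bags [set: T] e.
Proof.
have leafE v (vD : v \in D) : nbhd_bags (Some (enum_rank_in vD v)) = v |: nbhd e v.
  by rewrite /= enum_rankK_in.
split.
- by move=> t; apply: subsetT.
- move=> x _; case: (boolP (x \in D)) => xD; last by exists None; rewrite /= inE.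
  by exists (Some (enum_rank_in xD x)); rewrite leafE setU11.
- move=> x y _ _ exy; case: (boolP (x \in D)) => xD.
    by exists (Some (enum_rank_in xD x)); rewrite leafE !inE eqxx exy orbT.
  case: (boolP (y \in D)) => yD; last by exists None; rewrite /= !inE xD yD.
  by exists (Some (enum_rank_in yD y)); rewrite leafE !inE eqxx e_sym exy orbT.
move=> x t1 t2; case: (boolP (x \in D)) => xD.
  have onlyLeaf t : x \in nbhd_bags t -> t = Some (enum_rank_in xD x).
    case: t => [i|] /=; rewrite !inE; last by rewrite xD.
    case/orP => [/eqP xi|exi].
      by congr Some; apply: enum_val_inj; rewrite enum_rankK_in.
    by move: (D_indep (enum_valP i) xD); rewrite exi.
  by move=> /onlyLeaf -> /onlyLeaf ->.
set R := [rel s t | _].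
have viaCentre t : x \in nbhd_bags t -> connect R t None /\ connect R None t.
  case: t => [i|] xt; last by split; apply: connect0.
  by split; apply: connect1; rewrite /R /= xt /= inE xD.
by move=> /viaCentre [t1N _] /viaCentre [_ Nt2]; apply: connect_trans t1N Nt2.
Qed.

(* The adhesion set of the leaf of v is N(v). *)
Lemma nbhd_bags_adhesion : adhesion_three nbhd_bags.
Proof.
move=> i; set v := enum_val i; have vD : v \in D by apply: enum_valP.
suff -> : nbhd_bags None :&: nbhd_bags (Some i) = nbhd e v by apply: D_degree3.
apply/setP => z; rewrite /= !inE; case: (eqVneq z v) => [->|zv] /=.
  by rewrite vD e_irr.
by case evz: (e v z); rewrite ?andbF // (nbhd_D_outside vD evz).
Qed.

Lemma nbhd_bags_leaf_card i : #|nbhd_bags (Some i)| = 4.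
Proof. by rewrite /= cardsU1 inE e_irr D_degree3 // enum_valP. Qed.

Lemma centre_card : 3 <= #|~: D|.
Proof.
have [->|[v vD]] := set_0Vmem D.
  by rewrite setC0; case: G_q4c => _ big _; lia.
rewrite -(D_degree3 vD); apply: subset_leq_card; apply/subsetP => w.
by rewrite !inE => /(nbhd_D_outside vD).
Qed.

Lemma torso_shape :
  internally_4_connected (~: D) torso \/ iso_complete 4 (~: D) torso
    \/ iso_complete 3 (~: D) torso.
Proof.
have [big|small] := ltnP 4 #|~: D|.
  left; split=> // [|A B sepAB order3 proper]; last by case: (torso_no_proper_3sep sepAB order3 proper).
  split=> [|X XC X3]; first by lia.
  by apply: torso_connected XC; case: G_3connected => _; apply; rewrite ?subsetT.
right; have clique := torso_complete small.
have := centre_card; case: (eqVneq #|~: D| 4) => [card4|card_ne4] card3.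
  by left; apply: iso_complete_of_clique.
by right; apply: iso_complete_of_clique => //; lia.
Qed.

End NeighbourhoodStar.

Section IndependentDominating.
Variables (T : finType) (e : rel T).
Hypotheses (e_sym : symmetric e) (e_irr : irreflexive e).

(* Every vertex set L has an independent subset D dominating L: a maximal
   independent subset of L. *)
Lemma exists_independent_dominating (L : {set T}) :
  exists D : {set T}, [/\ D \subset L, {in D &, forall u w, ~~ e u w} &
    forall x, x \in L -> x \notin D -> exists2 v, v \in D & e x v].
Proof.
pose indep (D : {set T}) := (D \subset L) && [forall u in D, forall w in D, ~~ e u w].
have indep0 : indep set0 by rewrite /indep sub0set; apply/forall_inP => u; rewrite inE.
have [D /maxsetP [/andP [DL /forall_inP Dindep] Dmax] _] := maxset_exists indep0.
have D_indep : {in D &, forall u w, ~~ e u w} by move=> u w /Dindep /forall_inP; apply.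
exists D; split => // x xL xD; apply/exists_inP; apply: contraNT xD => nadj.
have x_indep v : v \in D -> ~~ e x v by move=> vD; apply: contra nadj => exv; apply/exists_inP; exists v.
have indep_xD : indep (x |: D).
  apply/andP; split; first by rewrite subUset sub1set xL.
  apply/forall_inP => u /setU1P [->|uD]; apply/forall_inP => w /setU1P [->|wD].
  - by rewrite e_irr.
  - exact: x_indep.
  - by rewrite e_sym x_indep.
  - exact: D_indep.
by rewrite -(Dmax _ indep_xD (subsetUr _ _)) setU11.
Qed.

End IndependentDominating.

Theorem mainTheorem11 (T : finType) (e : rel T) :
  symmetric e -> irreflexive e ->
  quasi_4_connected [set: T] e ->
  exists (n : nat) (bags : option 'I_n -> {set T}),
    [/\ star_decomposition bags [set: T] e,
        adhesion_three bags,
        internally_4_connected (bags None) (torso_rel bags e)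
          \/ iso_complete 4 (bags None) (torso_rel bags e)
          \/ iso_complete 3 (bags None) (torso_rel bags e) &
        forall i : 'I_n, #|bags (Some i)| = 4].
Proof.
move=> e_sym e_irr G_q4c.
have [D [DL D_indep D_dominates]] :=
  exists_independent_dominating e_sym e_irr [set x | #|nbhd e x| == 3].
have D_degree3 : {in D, forall v, #|nbhd e v| = 3}.
  by move=> v /(subsetP DL); rewrite inE => /eqP.
have D_dominates3 x : x \notin D -> #|nbhd e x| = 3 -> exists2 v, v \in D & e x v.
  by move=> xD deg3; apply: D_dominates; rewrite ?inE ?deg3.
exists #|D|, (@nbhd_bags T e D); split.
- exact: nbhd_bags_decomposition.
- exact: nbhd_bags_adhesion.
- exact: torso_shape D_dominates3.
- exact: nbhd_bags_leaf_card.
Qed.
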